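(* Let $p,q$ be distinct positive integers, $n\ge1$, and $s$ a nonempty finite sequence of elements of $\{p,q\}$. Every orbit (cycle) of the permutation $x\mapsto A^{p,q}_n(x,s)$ of $\{p,q\}^n$ has length a power of $2$.
   Context: Let $p,q$ be distinct positive integers. Define $\mathrm{Opp}(p)=q$, $\mathrm{Opp}(q)=p$. For $x\in\{p,q\}$ and a finite sequence $s=(s_1,\dots,s_m)$ of positive integers, $RLD^{p,q}(x,s)$ is the sequence over $\{p,q\}$ consisting of $s_1$ copies of $x$, then $s_2$ copies of $\mathrm{Opp}(x)$, then $s_3$ copies of $x$, and so on alternately. For $n\ge1$ and $x=(x_1,\dots,x_n)\in\{p,q\}^n$: $RLD^{p,q}_1(x_1,s)=RLD^{p,q}(x_1,s)$ and $RLD^{p,q}_n(x_{1:n},s)=RLD^{p,q}(x_n, RLD^{p,q}_{n-1}(x_{1:n-1},s))$. For a nonempty sequence $t$ over $\{p,q\}$, $\mathrm{OppEnd}(t)=\mathrm{Opp}(\text{last entry of } t)$. The automaton $A^{p,q}_n$ has state set $\{p,q\}^n$; for a state $x$ and a nonempty finite sequence $s$ over $\{p,q\}$, $A^{p,q}_n(x,s)$ is the state whose $i$-th coordinate is $\mathrm{OppEnd}(RLD^{p,q}_i(x_{1:i},s))$, $i=1,\dots,n$. The map $x\mapsto A^{p,q}_n(x,s)$ is a permutation of $\{p,q\}^n$. *)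

From mathcomp Require Import all_boot.
Set Implicit Arguments. Unset Strict Implicit. Unset Printing Implicit Defensive.

Definition opp (p q x : nat) : nat := if x == p then q else p.

Fixpoint rld (p q x : nat) (s : seq nat) : seq nat :=
  match s with
  | [::] => [::]
  | k :: s' => nseq k x ++ rld p q (opp p q x) s'
  end.

(* RLD_n^{p,q}(x_{1:n}, s) = RLD(x_n, RLD_{n-1}(x_{1:n-1}, s)), RLD_1(x_1,s)=RLD(x_1,s). *)
Definition rldn (p q : nat) (xs s : seq nat) : seq nat :=
  foldl (fun t xi => rld p q xi t) s xs.

(* OppEnd(t) = Opp(last entry of t) (t nonempty in all uses). *)
Definition oppend (p q : nat) (t : seq nat) : nat := opp p q (last 0 t).

(* A_n^{p,q}(x, s): i-th coordinate (i = 1..n) is OppEnd(RLD_i(x_{1:i}, s)). *)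
Definition automaton (p q n : nat) (x s : seq nat) : seq nat :=
  mkseq (fun i => oppend p q (rldn p q (take i.+1 x) s)) n.

Definition over_pq (p q : nat) (t : seq nat) : bool :=
  all (fun a => (a == p) || (a == q)) t.

From mathcomp Require Import all_boot.

Set Implicit Arguments. Unset Strict Implicit. Unset Printing Implicit Defensive.

(* Since RLD(a, T) consists of |T| alternating runs, OppEnd(RLD(a, T)) is a
   flipped |T| times.  Hence the i-th letter of A_n(x, s) is x_i, flipped iff
   |RLD_(i-1)(x_(1:i-1), s)| is odd: A_n acts on words letter by letter, each
   letter being flipped or not according to a bit computed from its prefix.
   Induct on the length: if the prefix x has period 2^m, then after 2^m steps
   the last letter a has been flipped according to the parity b of the flips
   seen along the orbit of x, so x a has period 2^m if b = 0 and 2^(m+1) if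
   b = 1. *)

Section BinaryTreeAutomorphism.

Variables (T : eqType) (D : pred T) (e : T -> T) (c : seq T -> bool).
Variable F : seq T -> seq T.

Hypotheses (e_in : {homo e : a / a \in D}) (eK : {in D, involutive e})
  (e_neq : {in D, forall a, e a != a}).
Hypotheses (F_nil : F [::] = [::])
  (F_rcons : forall x a, all D x -> a \in D ->
     F (rcons x a) = rcons (F x) (if c x then e a else a)).

Lemma all_F x : all D x -> all D (F x).
Proof.
elim/last_ind: x => [|x a IHx]; first by rewrite F_nil.
rewrite all_rcons => /andP[Da Dx]; rewrite F_rcons // all_rcons IHx // andbT.
by case: (c x) => //; apply: e_in.
Qed.

Lemma all_iter_F j x : all D x -> all D (iter j F x).
Proof. by move=> Dx; elim: j => //= j; apply: all_F. Qed.

Definition flips x j := \big[addb/false]_(i < j) c (iter i F x).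

Lemma iter_F_rcons j x a : all D x -> a \in D ->
  iter j F (rcons x a) = rcons (iter j F x) (if flips x j then e a else a).
Proof.
move=> Dx Da; elim: j => [|j IHj]; first by rewrite /flips big_ord0.
rewrite iterS IHj F_rcons ?all_iter_F //; last first.
  by case: flips => //; apply: e_in.
rewrite /flips big_ord_recr -/(flips x j) /=.
by case: (c _); case: (flips x j); rewrite ?eK.
Qed.

Lemma flips_periodD P i x :
  iter P F x = x -> flips x (P + i) = flips x P (+) flips x i.
Proof.
move=> xP; elim: i => [|i IHi]; first by rewrite addn0 /flips big_ord0 addbF.
by rewrite addnS /flips !big_ord_recr /= -/(flips x _) IHi addnC iterD xP addbA.
Qed.

Lemma flips_periodM P k x :
  iter P F x = x -> flips x (k * P) = odd k && flips x P.
Proof.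
move=> xP; elim: k => [|k IHk]; first by rewrite /flips big_ord0.
by rewrite mulSn flips_periodD // IHk /=; case: (flips x P); case: odd.
Qed.

Lemma iter_eq_pow2_dvd x : all D x ->
  exists m, forall j, (iter j F x == x) = (2 ^ m %| j).
Proof.
elim/last_ind: x => [|x a IHx].
  by exists 0 => j; rewrite dvd1n; apply/eqP; elim: j => //= j ->.
rewrite all_rcons => /andP[Da Dx]; have [m xm] := IHx Dx.
have xP : iter (2 ^ m) F x = x by apply/eqP; rewrite xm.
have flip_eq b : ((if b then e a else a) == a) = ~~ b.
  by case: b; rewrite ?eqxx ?(negbTE (e_neq Da)).
case bP: (flips x (2 ^ m)); [exists m.+1 | exists m] => j;
  rewrite iter_F_rcons // eqseq_rcons xm flip_eq.
- have [mj|not_mj] := boolP (2 ^ m %| j); last first.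
    by apply/esym/negbTE; apply: contra not_mj; apply/dvdn_trans/dvdn_exp2l.
  rewrite -{1}(divnK mj) flips_periodM // bP andbT -dvdn2.
  by rewrite dvdn_divRL // expnS.
- have [mj|] := boolP (2 ^ m %| j); rewrite //.
  by rewrite -(divnK mj) flips_periodM // bP andbF.
Qed.

End BinaryTreeAutomorphism.

Lemma last_rld p q x0 a T : T != [::] -> 0 \notin T ->
  last x0 (rld p q a T) = iter (size T).-1 (opp p q) a.
Proof.
elim: T x0 a => [|k T IHT] // x0 a _.
rewrite inE negb_or eq_sym => /andP[k_gt0 T0] /=.
rewrite last_cat; case: T IHT T0 => [|k' T] IHT T0 /=.
  by case: k k_gt0 => // k _; elim: k.
by rewrite IHT // -iterSr.
Qed.

Lemma oppend_rld p q a T : T != [::] -> 0 \notin T ->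
  oppend p q (rld p q a T) = iter (size T) (opp p q) a.
Proof.
by move=> T_neq_nil T0; rewrite /oppend last_rld //; case: T T_neq_nil T0.
Qed.

Lemma rld_neq_nil p q a T : T != [::] -> 0 \notin T -> rld p q a T != [::].
Proof. by case: T => [|[|k] T]. Qed.

Lemma rldn_rcons p q x a s : rldn p q (rcons x a) s = rld p q a (rldn p q x s).
Proof. exact: foldl_rcons. Qed.

Section RunLengthAutomaton.

Variables (p q : nat) (s : seq nat).
Hypotheses (p_gt0 : 0 < p) (q_gt0 : 0 < q) (p_neq_q : p != q).
Hypotheses (s_neq_nil : s != [::]) (s_letters : over_pq p q s).

Let letter : pred nat := fun a => (a == p) || (a == q).

Lemma opp_letter a : letter (opp p q a).
Proof. by rewrite /letter /opp; case: ifP; rewrite eqxx ?orbT. Qed.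

Lemma oppK : {in letter, involutive (opp p q)}.
Proof.
have q_neq_p : (q == p) = false by rewrite eq_sym (negbTE p_neq_q).
by move=> a /orP[]/eqP->; rewrite /opp ?eqxx q_neq_p ?eqxx.
Qed.

Lemma opp_neq a : opp p q a != a.
Proof. by rewrite /opp; case: (a =P p) => [->|/eqP]; rewrite // eq_sym. Qed.

Lemma iter_opp n a :
  letter a -> iter n (opp p q) a = if odd n then opp p q a else a.
Proof. by move=> la; elim: n => //= n ->; case: odd; rewrite ?oppK. Qed.

Lemma notin0_letters T : all letter T -> 0 \notin T.
Proof.
move=> /allP lT; apply/negP => /lT /orP[]/eqP zero_eq.
- by move: p_gt0; rewrite -zero_eq.
- by move: q_gt0; rewrite -zero_eq.
Qed.

Lemma rld_letters a T : letter a -> all letter (rld p q a T).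
Proof.
elim: T a => [|k T IHT] a la //=.
by rewrite all_cat all_nseq la orbT IHT ?opp_letter.
Qed.

Lemma rldn_letters x : all letter x -> all letter (rldn p q x s).
Proof.
elim/last_ind: x => [|x a IHx] //.
by rewrite all_rcons rldn_rcons => /andP[la _]; apply: rld_letters.
Qed.

Lemma rldn_neq_nil x : all letter x -> rldn p q x s != [::].
Proof.
elim/last_ind: x => [|x a IHx] //; rewrite all_rcons rldn_rcons => /andP[_ lx].
by apply: rld_neq_nil; rewrite ?IHx ?notin0_letters ?rldn_letters.
Qed.

Lemma automaton_rcons x a : all letter x -> letter a ->
  automaton p q (size (rcons x a)) (rcons x a) s =
  rcons (automaton p q (size x) x s)
        (if odd (size (rldn p q x s)) then opp p q a else a).
Proof.
move=> lx la; rewrite size_rcons /automaton mkseqS take_oversize ?size_rcons //.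
rewrite rldn_rcons oppend_rld ?rldn_neq_nil ?notin0_letters ?rldn_letters //.
rewrite iter_opp //.
congr rcons; apply/eq_in_map => i; rewrite mem_iota => /andP[_ lt_i].
by rewrite -cats1 takel_cat.
Qed.

Lemma iter_automaton_size j x :
  iter j (fun y => automaton p q (size x) y s) x =
  iter j (fun y => automaton p q (size y) y s) x.
Proof.
have size_iter i :
    size (iter i (fun y => automaton p q (size y) y s) x) = size x.
  by elim: i => //= i <-; rewrite size_mkseq.
by elim: j => //= j ->; rewrite size_iter.
Qed.

Lemma automaton_period_pow2 x : all letter x -> exists m, forall j,
  (iter j (fun y => automaton p q (size x) y s) x == x) = (2 ^ m %| j).
Proof.
move=> lx; have [m xm] := @iter_eq_pow2_dvd _ letter (opp p q)
  (fun y => odd (size (rldn p q y s))) (fun y => automaton p q (size y) y s)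
  (fun a _ => opp_letter a) oppK (in1W opp_neq) erefl automaton_rcons x lx.
by exists m => j; rewrite iter_automaton_size.
Qed.

End RunLengthAutomaton.

Theorem lemma5 (p q n : nat) (s : seq nat) :
  0 < p -> 0 < q -> p != q -> 1 <= n ->
  s != [::] -> over_pq p q s ->
  forall x : seq nat, size x = n -> over_pq p q x ->
  exists m : nat,
    iter (2 ^ m) (fun y => automaton p q n y s) x = x /\
    (forall j, 0 < j < 2 ^ m -> iter j (fun y => automaton p q n y s) x != x).
Proof.
move=> p_gt0 q_gt0 p_neq_q _ s_neq_nil s_letters x <- x_letters.
have [m xm] :=
  automaton_period_pow2 p_gt0 q_gt0 p_neq_q s_neq_nil s_letters x_letters.
exists m; split; first by apply/eqP; rewrite xm.
move=> j /andP[j_gt0 lt_j]; rewrite xm.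
by apply: contraTN lt_j => /(dvdn_leq j_gt0); rewrite leqNgt.
Qed.
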